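(* Let ${\bf A}=(a(i,j))_{1\le i,j\le n}$ be a real $n\times n$ matrix with no zero row, and let ${\bf A}_{\rm sde}$ and $|\tilde{\bf A}|$ be the matrices associated with ${\bf A}$ as defined below. Then for every nonzero complex number $\lambda$, the algebraic multiplicity of $\lambda$ as an eigenvalue of ${\bf A}_{\rm sde}$ equals the algebraic multiplicity of $\lambda$ as an eigenvalue of $|\tilde{\bf A}|$ (with multiplicity $0$ meaning $\lambda$ is not an eigenvalue).
   Context: For a real number $t$, $t_+=\max(t,0)$. Define $w_i=\big(\sum_{j=1}^n |a(i,j)|\big)^{-1}$, $1\le i\le n$, and $\tilde a(i,j)=w_i\,a(i,j)$. Let $|\tilde{\bf A}|=(|\tilde a(i,j)|)_{1\le i,j\le n}$ (an $n\times n$ row stochastic matrix), $\tilde{\bf A}_+=\big((\tilde a(i,j))_+\big)_{i,j}$, $\tilde{\bf A}_-=\big((-\tilde a(i,j))_+\big)_{i,j}$, and $${\bf A}_{\rm sde}=\begin{pmatrix}\tilde{\bf A}_+ & \tilde{\bf A}_-\\ \tilde{\bf A}_+ & \tilde{\bf A}_-\end{pmatrix}\in\mathbb{R}^{2n\times 2n}.$$ *)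

From HB Require Import structures.
From mathcomp Require Import all_boot all_order all_algebra.
From mathcomp Require Import complex.
From mathcomp Require Import reals.
Set Implicit Arguments. Unset Strict Implicit. Unset Printing Implicit Defensive.
Import Order.TTheory GRing.Theory Num.Theory.
Local Open Scope ring_scope.

Section SDE.
Variables (R : realType) (n : nat).
Implicit Types (A : 'M[R]_n).

Definition row_weight A (i : 'I_n) : R := (\sum_(j < n) `|A i j|)^-1.

Definition tildeA A : 'M[R]_n := \matrix_(i, j) (row_weight A i * A i j).

Definition abs_tildeA A : 'M[R]_n := \matrix_(i, j) `|tildeA A i j|.

Definition tildeA_pos A : 'M[R]_n := \matrix_(i, j) Num.max (tildeA A i j) 0.
Definition tildeA_neg A : 'M[R]_n := \matrix_(i, j) Num.max (- tildeA A i j) 0.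

Definition A_sde A : 'M[R]_(n + n) :=
  block_mx (tildeA_pos A) (tildeA_neg A) (tildeA_pos A) (tildeA_neg A).

End SDE.

Definition alg_mult (R : realType) (m : nat) (M : 'M[R]_m) (l : R[i]) : nat :=
  mup l (char_poly (map_mx (fun x : R => (x%:C)%C) M)).

From HB Require Import structures.
From mathcomp Require Import all_boot all_order all_algebra.
From mathcomp Require Import complex.
From mathcomp Require Import reals.
Import Order.TTheory GRing.Theory Num.Theory.
Local Open Scope ring_scope.

(** Conjugating [[P, N], [P, N]] by the unimodular [[1, 0], [1, 1]] gives the
   block-triangular [[P + N, N], [0, 0]], so the characteristic polynomial of
   A_sde is X^n times that of A~_+ + A~_- = |A~|; a factor X^n does not change the
   multiplicity of a nonzero root. *)

Lemma char_poly_block_repeat (R : comNzRingType) (n : nat) (P N : 'M[R]_n) :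
  char_poly (block_mx P N P N) = 'X^n * char_poly (P + N).
Proof.
set L : 'M[{poly R}]_(n + n) := block_mx 1%:M 0 (- 1%:M) 1%:M.
set U : 'M[{poly R}]_(n + n) := block_mx 1%:M 0 1%:M 1%:M.
have detL : \det L = 1 by rewrite det_lblock !det1 mulr1.
have detU : \det U = 1 by rewrite det_lblock !det1 mulr1.
have triangularize : L *m char_poly_mx (block_mx P N P N) *m U =
    block_mx (char_poly_mx (P + N)) (- map_mx polyC N) 0 'X%:M.
  rewrite /char_poly_mx map_block_mx (scalar_mx_block n n) opp_block_mx.
  rewrite add_block_mx !mulmx_block !(mul1mx, mul0mx, mulmx1, mulmx0, mulNmx).
  rewrite !(addr0, add0r) map_mxD; congr block_mx.
  - by rewrite opprD addrA.
  - by rewrite opprK (addrC (map_mx polyC N)) subrK -opprD subrK addNr.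
  - by rewrite opprK addrC subrK.
rewrite /char_poly -[LHS]mul1r -detL -[LHS]mulr1 -detU -!det_mulmx triangularize.
by rewrite det_ublock det_scalar mulrC.
Qed.

Lemma mup_XnM (F : fieldType) (k : nat) (l : F) (p : {poly F}) :
  l != 0 -> mup l ('X^k * p) = mup l p.
Proof.
by move=> l_neq0; rewrite mupMr // /root hornerXn expf_eq0 (negbTE l_neq0) andbF.
Qed.

Lemma normr_pos_neg (R : realDomainType) (t : R) :
  `|t| = Num.max t 0 + Num.max (- t) 0.
Proof.
have [t_ge0 | t_lt0] := leP 0 t.
  by rewrite ger0_norm // max_r ?addr0 // oppr_le0.
by rewrite ltr0_norm // max_l ?add0r // oppr_ge0 ltW.
Qed.

Lemma abs_tildeA_pos_neg (R : realType) (n : nat) (A : 'M[R]_n) :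
  abs_tildeA A = tildeA_pos A + tildeA_neg A.
Proof. by apply/matrixP => i j; rewrite !mxE normr_pos_neg. Qed.

Theorem proposition2 (R : realType) (n : nat) (A : 'M[R]_n) :
  (forall i : 'I_n, exists j : 'I_n, A i j != 0) ->
  forall l : R[i], l != 0 ->
    alg_mult (A_sde A) l = alg_mult (abs_tildeA A) l.
Proof.
move=> _ l l_neq0.
rewrite /alg_mult /A_sde map_block_mx char_poly_block_repeat mup_XnM //.
by rewrite abs_tildeA_pos_neg map_mxD.
Qed.
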